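(* Let $\theta_1,\theta_2,\dots\ge0$ be such that $I_0$ has radius of convergence $\rho\in(0,\infty]$, $I_0$ is strictly increasing on $[0,\rho)$ with $I_0(r)\to\infty$ as $r\uparrow\rho$, and for each $m\ge1$ let $r_m\in(0,\rho)$ be the unique solution of $I_0(r_m)=m$. Assume the saddle point approximation \[ h_m=\frac{e^{I_{-1}(r_m)}}{r_m^m\sqrt{2\pi I_1(r_m)}}\,(1+\varepsilon_m),\qquad \varepsilon_m\to0 \text{ as } m\to\infty. \] Then there are numbers $\delta_{n,j}$ with $\delta_{n,j}\to0$ as $n-j\to\infty$ such that for all $0\le j<n$, \[ \sqrt{\frac{I_1(r_n)}{I_1(r_{n-j})}}\,r_{n-j}^{\,j}\ \le\ \frac{h_{n-j}}{h_n}(1+\delta_{n,j})\ \le\ \sqrt{\frac{I_1(r_n)}{I_1(r_{n-j})}}\,r_n^{\,j}. \]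
   Context: For $\sigma\in\mathcal{S}_n$, $R_j(\sigma)$ is the number of cycles of length $j$; $h_0=1$ and $h_n=\frac1{n!}\sum_{\sigma\in\mathcal{S}_n}\prod_{j\ge1}\theta_j^{R_j(\sigma)}$. For real $\mu$, $I_\mu(z)=\sum_{n\ge1}n^\mu\theta_nz^n$; in particular the generating function satisfies $\sum_{n\ge0}h_nz^n=\exp I_{-1}(z)$.
   Formalization: Every $h_m$ with m ≥ 1 is also assumed strictly positive, a hypothesis absent from the saddle point assumptions. The statement above fails without it. *)

From mathcomp Require Import all_boot all_fingroup.
Set Implicit Arguments.
Unset Strict Implicit.
Unset Printing Implicit Defensive.

Definition cyc_count (n : nat) (s : 'S_n) (j : nat) : nat :=
  #|[set C in porbits s | #|C| == j]|.

From Stdlib Require Import Reals ClassicalEpsilon.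

(* h_n = (1/n!) * sum_{sigma in S_n} prod_{j>=1} theta_j^{R_j(sigma)}.
   Cycles have length <= n, so the product over j >= 1 reduces to 1 <= j <= n
   (the remaining factors are theta_j^0 = 1). *)
Definition h (theta : nat -> R) (n : nat) : R :=
  Rmult (Rinv (INR (n`!)))
    (\big[Rplus/R0]_(s : 'S_n)
        \big[Rmult/R1]_(1 <= j < n.+1) pow (theta j) (cyc_count s j)).

Local Open Scope R_scope.

Definition Iterm (theta : nat -> R) (mu z : R) (n : nat) : R :=
  match n with
  | O => 0
  | S _ => Rpower (INR n) mu * theta n * z ^ n
  end.

(* I_mu(z): the sum of the series (chosen by classical description when the
   series converges; only used at points where it converges). *)
Definition I (theta : nat -> R) (mu z : R) : R :=
  epsilon (inhabits 0) (fun l => infinite_sum (Iterm theta mu z) l).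

(* radius in (0, +oo]: None stands for +oo. *)
Definition below (rho : option R) (x : R) : Prop :=
  match rho with None => True | Some p => x < p end.

Definition is_radius (theta : nat -> R) (mu : R) (rho : option R) : Prop :=
  (forall z, below rho (Rabs z) -> exists l, infinite_sum (Iterm theta mu z) l) /\
  (match rho with
   | None => True
   | Some p => 0 < p /\
       forall z, p < Rabs z -> ~ exists l, infinite_sum (Iterm theta mu z) l
   end).

From Stdlib Require Import Reals Lra Lia ClassicalEpsilon.
Local Open Scope R_scope.

(* Write a = r_(n-j) <= b = r_n and t = ln b - ln a.  Term by term,
   k^(-1) theta_k (b^k - a^k) lies between theta_k a^k t and theta_k b^k t
   (convexity of exp on [k ln a, k ln b]), so
     (n - j) t = I_0(a) t <= I_(-1)(b) - I_(-1)(a) <= I_0(b) t = n t.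
   Dividing the saddle point approximations at n - j and at n gives
     h_(n-j) / h_n * (1 + eps_n) / (1 + eps_(n-j))
       = sqrt (I_1(b) / I_1(a)) * e^(-(I_(-1)(b) - I_(-1)(a))) * b^n / a^(n-j),
   and the bounds on the exponent place e^(...) * b^n / a^(n-j) between a^j
   and b^j.  Hence delta_(n,j) = (1 + eps_n) / (1 + eps_(n-j)) - 1 works. *)

Lemma exp_le_exp (x y : R) : x <= y -> exp x <= exp y.
Proof. intros [Hlt | ->]; [left; apply exp_increasing, Hlt | right; reflexivity]. Qed.

Lemma exp_sub_bounds (x y : R) : x <= y ->
  exp x * (y - x) <= exp y - exp x <= exp y * (y - x).
Proof.
  intros Hxy.
  assert (Hup := exp_ineq1_le (y - x)). assert (Hlo := exp_ineq1_le (x - y)).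
  assert (Ey : exp y = exp x * exp (y - x)) by (rewrite <- exp_plus; f_equal; ring).
  assert (Ex : exp x = exp y * exp (x - y)) by (rewrite <- exp_plus; f_equal; ring).
  assert (0 < exp x) by apply exp_pos. assert (0 < exp y) by apply exp_pos.
  split; nra.
Qed.

Lemma pow_exp_ln (x : R) (p : nat) : 0 < x -> x ^ p = exp (INR p * ln x).
Proof. intros Hx. rewrite <- ln_pow, exp_ln by (try apply pow_lt; exact Hx). reflexivity. Qed.

Lemma pow_sub_bounds (a b : R) (p : nat) : 0 < a <= b ->
  INR p * (ln b - ln a) * a ^ p <= b ^ p - a ^ p <= INR p * (ln b - ln a) * b ^ p.
Proof.
  intros [Ha Hab].
  assert (Hln : INR p * ln a <= INR p * ln b).
  { apply Rmult_le_compat_l; [apply pos_INR|].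
    destruct Hab as [Hlt | <-]; [left; apply ln_increasing|]; lra. }
  rewrite !(pow_exp_ln _ p) by lra.
  replace (INR p * (ln b - ln a)) with (INR p * ln b - INR p * ln a) by ring.
  destruct (exp_sub_bounds _ _ Hln) as [Hlo Hhi]; split; lra.
Qed.

Lemma infinite_sum_ex_le (u v : nat -> R) :
  (forall k, 0 <= u k <= v k) ->
  (exists l, infinite_sum v l) -> exists l, infinite_sum u l.
Proof.
  intros Huv [lv Hv].
  destruct (Rseries_CV_comp u v Huv (exist _ lv Hv)) as [lu Hu].
  exists lu; exact Hu.
Qed.

Lemma infinite_sum_le (u v : nat -> R) (lu lv : R) :
  (forall k, u k <= v k) -> infinite_sum u lu -> infinite_sum v lv -> lu <= lv.
Proof.
  intros Huv. apply Rle_cv_lim.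
  intros N; apply sum_Rle; intros k _; apply Huv.
Qed.

Lemma infinite_sum_minus (u v : nat -> R) (lu lv : R) :
  infinite_sum u lu -> infinite_sum v lv ->
  infinite_sum (fun k => u k - v k) (lu - lv).
Proof.
  intros Hu Hv.
  apply (Un_cv_ext (fun N => sum_f_R0 u N - sum_f_R0 v N)).
  - intros N; symmetry; apply minus_sum.
  - exact (CV_minus _ _ _ _ Hu Hv).
Qed.

Lemma infinite_sum_scal_r (u : nat -> R) (lu c : R) :
  infinite_sum u lu -> infinite_sum (fun k => u k * c) (lu * c).
Proof.
  intros Hu.
  assert (Hc : Un_cv (fun _ => c) c).
  { intros e He; exists 0%nat; intros; unfold Rdist; rewrite Rminus_diag, Rabs_R0; lra. }
  apply (Un_cv_ext (fun N => sum_f_R0 u N * c)).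
  - intros N; rewrite Rmult_comm; apply scal_sum.
  - exact (CV_mult _ _ _ _ Hu Hc).
Qed.

Lemma I_eq_of_sum (theta : nat -> R) (mu z l : R) :
  infinite_sum (Iterm theta mu z) l -> I theta mu z = l.
Proof.
  intros H; unfold I.
  apply (uniqueness_sum (Iterm theta mu z)); [apply epsilon_spec; eauto | exact H].
Qed.

Lemma Iterm_0_S (theta : nat -> R) (z : R) (k : nat) :
  Iterm theta 0 z (S k) = theta (S k) * z ^ S k.
Proof. unfold Iterm; rewrite Rpower_O by (apply lt_0_INR; lia); ring. Qed.

Lemma Iterm_m1_S (theta : nat -> R) (z : R) (k : nat) :
  Iterm theta (-1) z (S k) = / INR (S k) * (theta (S k) * z ^ S k).
Proof.
  unfold Iterm; replace (-1) with (- (1)) by ring.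
  rewrite Rpower_Ropp, Rpower_1 by (apply lt_0_INR; lia); ring.
Qed.

Section NonnegativeWeights.

Variable theta : nat -> R.
Hypothesis theta_ge0 : forall k, (1 <= k)%nat -> 0 <= theta k.

Lemma Iterm_0_le (a b : R) (k : nat) : 0 <= a <= b ->
  0 <= Iterm theta 0 a k <= Iterm theta 0 b k.
Proof.
  intros Hab; destruct k as [|k]; [simpl; lra|].
  rewrite !Iterm_0_S.
  assert (0 <= theta (S k)) by (apply theta_ge0; lia).
  assert (0 <= a ^ S k <= b ^ S k) by (split; [apply pow_le | apply pow_incr]; lra).
  split; [apply Rmult_le_pos | apply Rmult_le_compat_l]; lra.
Qed.

Lemma Iterm_m1_le_Iterm_0 (z : R) (k : nat) : 0 <= z ->
  0 <= Iterm theta (-1) z k <= Iterm theta 0 z k.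
Proof.
  intros Hz; destruct k as [|k]; [simpl; lra|].
  rewrite Iterm_m1_S, Iterm_0_S.
  assert (0 <= theta (S k) * z ^ S k)
    by (apply Rmult_le_pos; [apply theta_ge0; lia | apply pow_le, Hz]).
  assert (0 < / INR (S k) <= 1).
  { assert (1 <= INR (S k)) by (apply (le_INR 1); lia).
    split; [apply Rinv_0_lt_compat; lra | rewrite <- Rinv_1; apply Rinv_le_contravar; lra]. }
  split; nra.
Qed.

Lemma Iterm_m1_increment (a b : R) (k : nat) : 0 < a <= b ->
  Iterm theta 0 a k * (ln b - ln a)
    <= Iterm theta (-1) b k - Iterm theta (-1) a k
    <= Iterm theta 0 b k * (ln b - ln a).
Proof.
  intros Hab; destruct k as [|k]; [simpl; lra|].
  rewrite !Iterm_m1_S, !Iterm_0_S.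
  assert (Hp : 0 < INR (S k)) by (apply lt_0_INR; lia).
  assert (Hc : 0 <= theta (S k) / INR (S k))
    by (apply Rmult_le_pos; [apply theta_ge0; lia | left; apply Rinv_0_lt_compat, Hp]).
  destruct (pow_sub_bounds _ _ (S k) Hab) as [Hlo Hhi].
  replace (/ INR (S k) * (theta (S k) * b ^ S k) - / INR (S k) * (theta (S k) * a ^ S k))
    with (theta (S k) / INR (S k) * (b ^ S k - a ^ S k)) by (field; lra).
  replace (theta (S k) * a ^ S k * (ln b - ln a))
    with (theta (S k) / INR (S k) * (INR (S k) * (ln b - ln a) * a ^ S k)) by (field; lra).
  replace (theta (S k) * b ^ S k * (ln b - ln a))
    with (theta (S k) / INR (S k) * (INR (S k) * (ln b - ln a) * b ^ S k)) by (field; lra).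
  split; apply Rmult_le_compat_l; assumption.
Qed.

Lemma I_m1_increment (a b : R) : 0 < a <= b ->
  (exists l, infinite_sum (Iterm theta 0 b) l) ->
  I theta 0 a * (ln b - ln a)
    <= I theta (-1) b - I theta (-1) a
    <= I theta 0 b * (ln b - ln a).
Proof.
  intros Hab Hb.
  assert (Ha : exists l, infinite_sum (Iterm theta 0 a) l).
  { apply (infinite_sum_ex_le _ (Iterm theta 0 b)); [|exact Hb].
    intros k; apply Iterm_0_le; lra. }
  destruct Ha as [l0a S0a], Hb as [l0b S0b].
  destruct (infinite_sum_ex_le (Iterm theta (-1) a) (Iterm theta 0 a))
    as [lma Sma]; [intros k; apply Iterm_m1_le_Iterm_0; lra | eauto |].
  destruct (infinite_sum_ex_le (Iterm theta (-1) b) (Iterm theta 0 b))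
    as [lmb Smb]; [intros k; apply Iterm_m1_le_Iterm_0; lra | eauto |].
  rewrite (I_eq_of_sum _ _ _ _ S0a), (I_eq_of_sum _ _ _ _ S0b),
    (I_eq_of_sum _ _ _ _ Sma), (I_eq_of_sum _ _ _ _ Smb).
  pose proof (infinite_sum_minus _ _ _ _ Smb Sma) as Sdiff.
  split; eapply infinite_sum_le; try eassumption;
    try (apply infinite_sum_scal_r; eassumption);
    intros k; apply (Iterm_m1_increment _ _ k Hab).
Qed.

End NonnegativeWeights.

Lemma exp_pow_ratio_between (a b D : R) (j m n : nat) :
  0 < a -> 0 < b -> (j + m)%nat = n ->
  INR m * (ln b - ln a) <= D <= INR n * (ln b - ln a) ->
  a ^ j <= exp (- D) * b ^ n / a ^ m <= b ^ j.
Proof.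
  intros Ha Hb Hn [Hlo Hhi].
  rewrite !(pow_exp_ln a), !(pow_exp_ln b) by assumption.
  unfold Rdiv; rewrite <- exp_Ropp, <- !exp_plus.
  rewrite <- Hn, plus_INR in Hhi |- *.
  split; apply exp_le_exp; nra.
Qed.

(* Since x / 0 = 0, a positive value of the saddle point formula forces its
   denominator and its correction factor to be nonzero. *)
Lemma saddle_form_pos_neq0 (E A S c : R) :
  0 < E / (A * S) * c -> S <> 0 /\ c <> 0.
Proof.
  intros Hp; split; intros Z; rewrite Z in Hp.
  - unfold Rdiv in Hp; rewrite Rmult_0_r, Rinv_0, Rmult_0_r, Rmult_0_l in Hp; lra.
  - rewrite Rmult_0_r in Hp; lra.
Qed.

Lemma saddle_ratio (c hm hn Em En Pm Pn a b cm cn : R) (m n : nat) :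
  0 < c -> 0 < a -> 0 < b -> 0 < hm -> 0 < hn ->
  hm = exp Em / (a ^ m * sqrt (c * Pm)) * cm ->
  hn = exp En / (b ^ n * sqrt (c * Pn)) * cn ->
  hm / hn * (cn / cm) = sqrt (Pn / Pm) * (exp (- (En - Em)) * b ^ n / a ^ m).
Proof.
  intros Hc Ha Hb Hhm Hhn Em_def En_def.
  rewrite Em_def in Hhm; rewrite En_def in Hhn.
  destruct (saddle_form_pos_neq0 _ _ _ _ Hhm) as [Sm cm0].
  destruct (saddle_form_pos_neq0 _ _ _ _ Hhn) as [Sn cn0].
  assert (HPm : 0 < c * Pm).
  { apply Rnot_le_lt; intros Hle; apply Sm, sqrt_neg_0, Hle. }
  assert (Hsqrt : sqrt (Pn / Pm) = sqrt (c * Pn) / sqrt (c * Pm)).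
  { rewrite <- sqrt_div_alt by exact HPm; f_equal; field; nra. }
  assert (0 < a ^ m) by (apply pow_lt, Ha). assert (0 < b ^ n) by (apply pow_lt, Hb).
  assert (0 < exp En) by apply exp_pos.
  rewrite Hsqrt, Em_def, En_def, Ropp_minus_distr; unfold Rminus; rewrite exp_plus, exp_Ropp.
  field; repeat split; lra.
Qed.

Lemma cv_ratio_one_plus (eps : nat -> R) : Un_cv eps 0 ->
  forall e, 0 < e -> exists N : nat, forall n m, (N <= m)%nat -> (N <= n)%nat ->
    Rabs ((1 + eps n) / (1 + eps m) - 1) < e.
Proof.
  intros Heps e He.
  destruct (Heps (Rmin (1/2) (e/4))) as [N HN]; [apply Rmin_pos; lra|].
  exists N; intros n m Hm Hn.
  assert (H1 := HN n Hn). assert (H2 := HN m Hm).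
  unfold Rdist in H1, H2; rewrite Rminus_0_r in H1, H2.
  assert (Hm1 := Rmin_l (1/2) (e/4)). assert (Hm2 := Rmin_r (1/2) (e/4)).
  apply Rabs_def2 in H1; apply Rabs_def2 in H2.
  assert (Hpos : 1/2 < 1 + eps m) by lra.
  replace ((1 + eps n) / (1 + eps m) - 1) with ((eps n - eps m) * / (1 + eps m))
    by (field; lra).
  rewrite Rabs_mult, Rabs_inv, (Rabs_right (1 + eps m)) by lra.
  assert (Hu : Rabs (eps n - eps m) < e / 2) by (apply Rabs_def1; lra).
  assert (Hv : 0 < / (1 + eps m) < 2).
  { split; [apply Rinv_0_lt_compat; lra|].
    replace 2 with (/ (1/2)) by field; apply Rinv_lt_contravar; lra. }
  pose proof (Rabs_pos (eps n - eps m)); nra.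
Qed.

Theorem proposition2p3
  (theta : nat -> R) (rho : option R) (r : nat -> R) (eps : nat -> R)
  (Htheta : forall j, (1 <= j)%nat -> 0 <= theta j)
  (Hrad : is_radius theta 0 rho)
  (Hinc : forall x y, 0 <= x -> x < y -> below rho y ->
            I theta 0 x < I theta 0 y)
  (Hinf : forall M, exists x0, 0 <= x0 /\ below rho x0 /\
            forall x, x0 <= x -> below rho x -> M < I theta 0 x)
  (Hr : forall m, (1 <= m)%nat ->
          0 < r m /\ below rho (r m) /\ I theta 0 (r m) = INR m)
  (Hsaddle : forall m, (1 <= m)%nat ->
      h theta m = exp (I theta (-1) (r m))
                  / (r m ^ m * sqrt (2 * PI * I theta 1 (r m))) * (1 + eps m))
  (Heps : Un_cv eps 0)
  (Hpos : forall m, (1 <= m)%nat -> 0 < h theta m) :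
  exists delta : nat -> nat -> R,
    (forall e, 0 < e -> exists N : nat, forall n j, (j < n)%nat ->
        (N <= n - j)%nat -> Rabs (delta n j) < e) /\
    (forall n j, (j < n)%nat ->
       sqrt (I theta 1 (r n) / I theta 1 (r (n - j)%nat)) * r (n - j)%nat ^ j
         <= h theta (n - j)%nat / h theta n * (1 + delta n j)
       /\ h theta (n - j)%nat / h theta n * (1 + delta n j)
         <= sqrt (I theta 1 (r n) / I theta 1 (r (n - j)%nat)) * r n ^ j).
Proof.
  exists (fun n j => (1 + eps n) / (1 + eps (n - j)%nat) - 1); split.
  { intros e He; destruct (cv_ratio_one_plus _ Heps _ He) as [N HN].
    exists N; intros n j _ HNm; apply HN; lia. }
  intros n j Hjn; set (m := (n - j)%nat).
  assert (Hm : (1 <= m)%nat) by lia. assert (Hn : (1 <= n)%nat) by lia.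
  destruct (Hr m Hm) as (Ha & Hma & I0a), (Hr n Hn) as (Hb & Hnb & I0b).
  assert (Hab : r m <= r n).
  { apply Rnot_lt_le; intros Hba.
    pose proof (Hinc _ _ (Rlt_le _ _ Hb) Hba Hma) as Hlt.
    rewrite I0a, I0b in Hlt; apply INR_lt in Hlt; lia. }
  assert (Hsum : exists l, infinite_sum (Iterm theta 0 (r n)) l)
    by (apply (proj1 Hrad); rewrite Rabs_right by lra; exact Hnb).
  pose proof (I_m1_increment _ Htheta _ _ (conj Ha Hab) Hsum) as Hincr.
  rewrite I0a, I0b in Hincr.
  destruct (exp_pow_ratio_between _ _ _ j m n Ha Hb ltac:(lia) Hincr) as [Hlo Hhi].
  rewrite Rplus_minus,
    (saddle_ratio _ _ _ _ _ _ _ _ _ _ _ _ _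
      Rgt_2PI_0 Ha Hb (Hpos m Hm) (Hpos n Hn) (Hsaddle m Hm) (Hsaddle n Hn)).
  split; apply Rmult_le_compat_l; try apply sqrt_pos; assumption.
Qed.
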